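(* Let $V\ge0$ be locally integrable on $\mathbb H^n$, $V\not\equiv0$, with $V\in RH_s$ for some $s\ge Q/2$, and let $0<\alpha<Q$. Let $\delta\in(0,1]$ be the Lipschitz exponent of the heat kernel described in the context. For every $N\in\mathbb N$ there is $C_{N,\alpha}>0$ such that for all $u,v,w\in\mathbb H^n$ with $|v^{-1}u|\le|w^{-1}u|/2$, $$|\mathcal K_\alpha(u,w)-\mathcal K_\alpha(v,w)|\le C_{N,\alpha}\Big[1+\frac{|w^{-1}u|}{\rho(u)}\Big]^{-N}\frac{|v^{-1}u|^{\delta}}{|w^{-1}u|^{Q-\alpha+\delta}}.$$
   Context: The Heisenberg group $\mathbb H^n$ is $\mathbb C^n\times\mathbb R$ with multiplication $(z,t)\cdot(z',t')=(z+z',t+t'+2\,\mathrm{Im}(z\cdot\overline{z'}))$, $z\cdot\overline{z'}=\sum_j z_j\overline{z_j'}$; inverse $(z,t)^{-1}=(-z,-t)$. Homogeneous norm $|(z,t)|=(|z|^4+t^2)^{1/4}$, balls $B(u,r)=\{v:|u^{-1}v|<r\}$, $Q=2n+2$. With $z_j=x_j+iy_j$, $X_j=\partial_{x_j}+2y_j\partial_t$, $Y_j=\partial_{y_j}-2x_j\partial_t$, $\Delta_{\mathbb H^n}=\sum_j(X_j^2+Y_j^2)$. $V\in RH_s$ means $\big(\frac1{|B|}\int_B V^s\big)^{1/s}\le C\frac1{|B|}\int_B V$ for all balls. Critical radius: $\rho(u)=\sup\{r>0: r^{2-Q}\int_{B(u,r)}V\le 1\}\in(0,\infty)$. $\mathcal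 L=-\Delta_{\mathbb H^n}+V$, $P_s(u,v)$ is the kernel of $e^{-s\mathcal L}$, and $\mathcal K_\alpha(u,v)=\frac1{\Gamma(\alpha/2)}\int_0^\infty P_s(u,v)s^{\alpha/2-1}ds$. The exponent $\delta$: a fixed $\delta\in(0,1]$ (which exists under these hypotheses) such that for every $N\in\mathbb N$ there is $C_N>0$ with $|P_s(u\cdot h,v)-P_s(u,v)|\le C_N(|h|/\sqrt s)^{\delta}s^{-Q/2}\exp(-|v^{-1}u|^2/(As))[1+\sqrt s/\rho(u)+\sqrt s/\rho(v)]^{-N}$ for all $s>0$, $u,v\in\mathbb H^n$, $|h|\le|v^{-1}u|/2$, with $A>0$ a fixed constant. *)

From HB Require Import structures.
From mathcomp Require Import all_boot all_order all_algebra.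
From mathcomp Require Import all_classical all_reals all_analysis.
Set Implicit Arguments. Unset Strict Implicit. Unset Printing Implicit Defensive.
Import Order.TTheory GRing.Theory Num.Theory.
Import numFieldNormedType.Exports.
Local Open Scope classical_set_scope.
Local Open Scope ring_scope.

Section Heisenberg.
Variable R : realType.
Variable n : nat.

(* A point (x, y, t) of H^n, with z_j = x_j + i y_j. *)
Definition Hn := ('rV[R]_n * 'rV[R]_n * R)%type.

Definition hx (u : Hn) : 'rV[R]_n := u.1.1.
Definition hy (u : Hn) : 'rV[R]_n := u.1.2.
Definition ht (u : Hn) : R := u.2.

(* (z,t).(z',t') = (z+z', t+t'+2 Im(z . conj z')),
   Im(z_j conj z'_j) = y_j x'_j - x_j y'_j *)
Definition hmul (u v : Hn) : Hn :=
  (hx u + hx v, hy u + hy v,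
   ht u + ht v + 2 * \sum_(j < n) (hy u 0 j * hx v 0 j - hx u 0 j * hy v 0 j)).

Definition hinv (u : Hn) : Hn := (- hx u, - hy u, - ht u).

Definition zsq (u : Hn) : R := \sum_(j < n) (hx u 0 j ^+ 2 + hy u 0 j ^+ 2).

Definition hnorm (u : Hn) : R := Num.sqrt (Num.sqrt (zsq u ^+ 2 + ht u ^+ 2)).

Definition hball (u : Hn) (r : R) : set Hn := [set v | hnorm (hmul (hinv u) v) < r].

Definition Qdim : R := (2 * n + 2)%:R.

(* Iterated Lebesgue integral over R^k of a function of the coordinates
   (c 0, ..., c (k-1)); by Tonelli this is the integral with respect to
   Lebesgue measure on R^k for non-negative measurable integrands. *)
Fixpoint rint (k : nat) (f : (nat -> R) -> \bar R) : \bar R :=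
  match k with
  | 0 => f (fun _ => 0)
  | k'.+1 => (\int[@lebesgue_measure R]_(r in setT)
               rint k' (fun c => f (fun i => if i == k' then r else c i)))%E
  end.

Definition coords_to_Hn (c : nat -> R) : Hn :=
  (\row_(j < n) c j, \row_(j < n) c (n + j)%N, c (2 * n)%N).

(* Integral over H^n (Haar measure = Lebesgue measure on R^(2n+1)). *)
Definition hint (f : Hn -> \bar R) : \bar R :=
  rint (2 * n).+1 (fun c => f (coords_to_Hn c)).

Definition hint_on (A : set Hn) (f : Hn -> R) : \bar R :=
  hint (fun x => (\1_A x * f x)%:E).

Definition hmeas (A : set Hn) : \bar R := hint_on A (fun _ => 1).

Definition Hlocally_integrable (V : Hn -> R) : Prop :=
  forall u r, 0 < r -> (hint_on (hball u r) V < +oo)%E.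

(* V in RH_s :  ( |B|^{-1} int_B V^s )^{1/s} <= C |B|^{-1} int_B V,
   written as  int_B V^s <= (C |B|^{-1} int_B V)^s |B|. *)
Definition reverse_Holder (s : R) (V : Hn -> R) : Prop :=
  exists2 C : R, 0 < C &
    forall u r, 0 < r ->
      (hint_on (hball u r) (fun x => (V x `^ s)%R) <=
       ((C * (fine (hint_on (hball u r) V) / fine (hmeas (hball u r)))) `^ s
          * fine (hmeas (hball u r)))%R%:E)%E.

Definition crit_radius (V : Hn -> R) (u : Hn) : R :=
  sup [set r : R | 0 < r /\
        (r `^ (2 - Qdim) * fine (hint_on (hball u r) V) <= 1)].

Definition Gammaf (a : R) : R :=
  Rintegral (@lebesgue_measure R) `]0, +oo[%classic
            (fun s => s `^ (a - 1) * expR (- s)).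

Definition Kalpha (P : R -> Hn -> Hn -> R) (alpha : R) (u v : Hn) : R :=
  (Gammaf (alpha / 2))^-1 *
  Rintegral (@lebesgue_measure R) `]0, +oo[%classic
            (fun s => P s u v * s `^ (alpha / 2 - 1)).

Definition decay (rho : Hn -> R) (N : nat) (s : R) (u v : Hn) : R :=
  ((1 + Num.sqrt s / rho u + Num.sqrt s / rho v) ^+ N)^-1.

(* Gaussian upper bound of the heat kernel of L = -Delta + V *)
Definition heat_upper_bound (P : R -> Hn -> Hn -> R) (rho : Hn -> R) (A : R) :=
  forall N : nat, exists2 C : R, 0 < C &
    forall s u v, 0 < s ->
      `|P s u v| <= C * s `^ (- (Qdim / 2))
                     * expR (- (hnorm (hmul (hinv v) u) ^+ 2 / (A * s)))
                     * decay rho N s u v.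

Definition heat_lipschitz (P : R -> Hn -> Hn -> R) (rho : Hn -> R) (A delta : R) :=
  forall N : nat, exists2 C : R, 0 < C &
    forall s u v h, 0 < s -> hnorm h <= hnorm (hmul (hinv v) u) / 2 ->
      `|P s (hmul u h) v - P s u v|
        <= C * (hnorm h / Num.sqrt s) `^ delta * s `^ (- (Qdim / 2))
             * expR (- (hnorm (hmul (hinv v) u) ^+ 2 / (A * s)))
             * decay rho N s u v.

End Heisenberg.

From HB Require Import structures.
From mathcomp Require Import all_boot all_order all_algebra.
From mathcomp Require Import all_classical all_reals all_analysis.
From mathcomp Require Import ring lra measurable_realfun ftc.
Import Order.TTheory GRing.Theory Num.Theory.
Import numFieldNormedType.Exports.
Local Open Scope classical_set_scope.
Local Open Scope ring_scope.

(** Write [K_alpha(u,w) - K_alpha(v,w)] as [Gamma(alpha/2)^-1] times the integral over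
   [s > 0] of [(P_s(u,w) - P_s(v,w)) s^(alpha/2 - 1)].  Since [v = u h] with
   [|h| = |v^-1 u| <= |w^-1 u| / 2], the Lipschitz estimate of the heat kernel bounds
   the integrand by [|v^-1 u|^delta s^(b - 1) exp(- r^2 / (A s))] times the decay factor,
   where [r = |w^-1 u|] and [b = (alpha - Q - delta) / 2 < 0].  The decay factor is at
   most [[1 + r / rho(u)]^-N [1 + r / sqrt s]^N], and
   [s^(b - 1) exp(- r^2 / (A s)) [1 + r / sqrt s]^N <= K (s + r^2)^(b - 1)]: for
   [s >= r^2] trivially, for [s < r^2] because [exp (- r^2 / (A s))] beats every power
   of [r^2 / s].  Finally [int_0^oo (s + r^2)^(b - 1) ds = r^(2 b) / (- b)] and
   [r^(2 b) = r^-(Q - alpha + delta)].  The Gaussian upper bound gives a bound of the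
   same shape for [P_s(u,w) s^(alpha/2 - 1)], so the integrals defining [K_alpha]
   converge absolutely. *)

Section HeisenbergGroup.
Variables (R : realType) (n : nat).
Implicit Types u v : Hn R n.

Lemma hmulKV u v : hmul u (hmul (hinv u) v) = v.
Proof.
case: u => [[xu yu] tu]; case: v => [[xv yv] tv].
rewrite /hmul /hinv /hx /hy /ht /=.
congr (_, _, _); try by apply/rowP => j; rewrite !mxE; ring.
have -> a b c d e : a + (b + c + 2 * d) + 2 * e = a + b + c + 2 * (d + e) :> R by ring.
rewrite -big_split big1 ?mulr0 ?addr0 /=; first ring.
by move=> j _; rewrite !mxE; ring.
Qed.

Lemma hnorm_ge0 u : 0 <= hnorm u.
Proof. exact: sqrtr_ge0. Qed.

Lemma hnorm_hinv_sym u v : hnorm (hmul (hinv u) v) = hnorm (hmul (hinv v) u).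
Proof.
case: u => [[xu yu] tu]; case: v => [[xv yv] tv].
rewrite /hnorm /zsq /hmul /hinv /hx /hy /ht /=.
congr (Num.sqrt (Num.sqrt (_ ^+ 2 + _))).
  by apply: eq_bigr => j _; rewrite !mxE; ring.
rewrite -[RHS]sqrrN; congr (_ ^+ 2); apply/eqP; rewrite -addr_eq0.
rewrite addrACA -mulrDr -big_split big1 ?mulr0 ?addr0 /=; first by apply/eqP; ring.
by move=> j _; rewrite !mxE; ring.
Qed.

End HeisenbergGroup.

(* [crit_radius] is a [sup] of positive reals, and [sup] of a set without a supremum is [0]. *)
Lemma crit_radius_ge0 (R : realType) n (V : Hn R n -> R) u : 0 <= crit_radius V u.
Proof.
have [supE|no_sup] := pselect (has_sup [set r : R | 0 < r /\
  r `^ (2 - Qdim R n) * fine (hint_on (hball u r) V) <= 1]); last by rewrite /crit_radius sup_out.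
have [[r Er] _] := supE.
exact: le_trans (ltW Er.1) (sup_upper_bound supE Er).
Qed.

Section HeatProfile.
Variable R : realType.
Implicit Types (e x y r s : R).

Lemma gt0_powRE x y : 0 < x -> x `^ y = expR (y * ln x).
Proof. by move=> x0; rewrite /powR gt_eqF. Qed.

Lemma gt0_powRD x y z : 0 < x -> x `^ (y + z) = x `^ y * x `^ z.
Proof. by move=> x0; rewrite powRD // (gt_eqF x0) implybT. Qed.

Lemma powR_div_sqrt d s y : 0 <= d -> 0 < s ->
  (d / Num.sqrt s) `^ y = d `^ y * s `^ (- (y / 2)).
Proof.
move=> d0 s0; rewrite powRM ?invr_ge0 ?sqrtr_ge0 // -powR12_sqrt ?ltW //.
by rewrite -powRN -powRrM mulNr (mulrC 2^-1).
Qed.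

Lemma exprn_expRN_le x k : 0 <= x -> x ^+ k * expR (- x) <= k`!%:R.
Proof.
move=> x0; rewrite expRN ler_pdivrMr ?expR_gt0 //.
case: k => [|k]; first by rewrite expr0 mul1r; apply: le_trans (expR_ge1Dx x); lra.
have := expR_ge1Dxn k x0; rewrite -ler_pdivrMl ?ltr0n ?fact_gt0 //.
apply: le_trans; rewrite mulrC ler_wpDl //.
Qed.

Lemma exprn_expRN_scaled_le (A : R) x k : 0 < A -> 0 <= x ->
  x ^+ k * expR (- (x / A)) <= A ^+ k * k`!%:R.
Proof.
move=> A0 x0; have := exprn_expRN_le (x / A) k (divr_ge0 x0 (ltW A0)).
by rewrite expr_div_n mulrAC ler_pdivrMr ?exprn_gt0 // [_ * A ^+ k]mulrC.
Qed.

Lemma powR_le_double e x y : e <= 0 -> 0 < x -> 0 < y -> y <= 2 * x ->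
  x `^ e <= 2 `^ (- e) * y `^ e.
Proof.
move=> e0 x0 y0 yx; rewrite !gt0_powRE // -expRD ler_expR.
have : ln y <= ln 2 + ln x by rewrite -lnM ?posrE // ler_ln ?posrE ?mulr_gt0.
by move=> h; nra.
Qed.

Section Bounds.
Variables (e A : R) (M : nat).
Hypotheses (e_le0 : e <= 0) (A_gt0 : 0 < A).

(* With [r = |w^-1 u|] and [e = (alpha - Q - delta) / 2 - 1], the integrand defining
   [K_alpha] is bounded by a multiple of [heat_profile r s]. *)
Definition heat_profile r s := s `^ e * expR (- (r ^+ 2 / (A * s))) * (1 + r / Num.sqrt s) ^+ M.

Lemma heat_profile_le_near r s : 0 <= r -> 0 < s -> r ^+ 2 <= s ->
  heat_profile r s <= 2 `^ (- e) * 2 ^+ M * (s + r ^+ 2) `^ e.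
Proof.
move=> r0 s0 rs; have sq0 : 0 < Num.sqrt s by rewrite sqrtr_gt0.
have ratio0 : 0 <= r / Num.sqrt s := divr_ge0 r0 (ltW sq0).
have ratio1 : r / Num.sqrt s <= 1.
  by rewrite ler_pdivrMr // mul1r -(ger0_norm r0) -sqrtr_sqr ler_sqrt // ltW.
have gauss1 : expR (- (r ^+ 2 / (A * s))) <= 1.
  by rewrite expR_le1 oppr_le0 divr_ge0 ?sqr_ge0 // ltW // mulr_gt0.
have pow2 : (1 + r / Num.sqrt s) ^+ M <= 2 ^+ M by apply: lerXn2r; rewrite ?nnegrE; lra.
have sr : s `^ e <= 2 `^ (- e) * (s + r ^+ 2) `^ e.
  by apply: powR_le_double; rewrite ?ltr_pwDl ?sqr_ge0 //; lra.
rewrite /heat_profile [X in _ <= X]mulrAC.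
apply: ler_pM; rewrite ?exprn_ge0 ?mulr_ge0 ?powR_ge0 ?expR_ge0 //; first lra.
by rewrite -[X in _ <= X]mulr1; apply: ler_pM; rewrite ?powR_ge0 ?expR_ge0.
Qed.

(* With [x = r^2 / s > 1]: [s^e = (r^2)^e x^-e], [r / sqrt s = sqrt x <= x], and
   [exp (- x / A)] absorbs the resulting power of [x]. *)
Lemma heat_profile_le_far (m : nat) r s : - e <= m%:R -> 0 <= r -> 0 < s -> s < r ^+ 2 ->
  heat_profile r s <= 2 `^ (- e) * 2 ^+ M * (A ^+ (m + M) * (m + M)`!%:R) * (s + r ^+ 2) `^ e.
Proof.
move=> em r0 s0 sr; rewrite /heat_profile; set c := r ^+ 2 in sr *; set x := c / s.
have c0 : 0 < c by lra.
have x1 : 1 < x by rewrite ltr_pdivlMr // mul1r.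
have y0 : 0 <= r / Num.sqrt s by rewrite divr_ge0 ?sqrtr_ge0.
have y2 : (r / Num.sqrt s) ^+ 2 = x by rewrite expr_div_n sqr_sqrtr ?ltW.
have pow2x : (1 + r / Num.sqrt s) ^+ M <= 2 ^+ M * x ^+ M.
  by rewrite -exprMn; apply: lerXn2r; rewrite ?nnegrE; nra.
have sx : s `^ e = c `^ e * x `^ (- e).
  by rewrite !gt0_powRE // ?(lt_trans ltr01) // -expRD /x ln_div ?posrE //; congr expR; ring.
have xm : x `^ (- e) <= x ^+ m.
  by rewrite -powR_mulrn ?(ltW (lt_trans ltr01 x1)) //; apply: ler_powR; lra.
have cr : c `^ e <= 2 `^ (- e) * (s + c) `^ e.
  by apply: powR_le_double; rewrite ?addr_gt0 //; lra.
have gx : c / (A * s) = x / A by rewrite /x; field; rewrite ?gt_eqF.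
have x0 : 0 <= x by lra.
rewrite sx gx.
apply: (le_trans (y := c `^ e * x ^+ m * expR (- (x / A)) * (2 ^+ M * x ^+ M))).
  apply: ler_pM; rewrite ?exprn_ge0 ?mulr_ge0 ?powR_ge0 ?expR_ge0 //; first lra.
  by apply: ler_pM; rewrite ?mulr_ge0 ?powR_ge0 ?expR_ge0 // ler_wpM2l ?powR_ge0.
rewrite (_ : _ * _ = 2 ^+ M * c `^ e * (x ^+ (m + M) * expR (- (x / A)))); last first.
  by rewrite exprD; ring.
apply: le_trans (ler_wpM2l _ (exprn_expRN_scaled_le A x (m + M) A_gt0 x0)) _.
  by rewrite mulr_ge0 ?exprn_ge0 ?powR_ge0.
set B := _ * _ `!%:R; have B0 : 0 <= B by rewrite mulr_ge0 ?exprn_ge0 ?ltW.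
rewrite mulrAC [X in _ <= X](_ : _ = 2 ^+ M * B * (2 `^ (- e) * (s + c) `^ e)); last by ring.
by rewrite ler_wpM2l // mulr_ge0 ?exprn_ge0.
Qed.

Lemma heat_profile_le : exists2 K : R, 0 < K &
  forall r s, 0 <= r -> 0 < s -> heat_profile r s <= K * (s + r ^+ 2) `^ e.
Proof.
pose m := (Num.truncn (- e)).+1.
have em : - e <= m%:R by apply/ltW/real_truncnS_gt/num_real.
pose B := A ^+ (m + M) * (m + M)`!%:R.
have B0 : 0 <= B by rewrite mulr_ge0 ?exprn_ge0 ?ltW.
exists (2 `^ (- e) * 2 ^+ M * (1 + B)).
  by rewrite !mulr_gt0 ?powR_gt0 ?exprn_gt0 ?ltr_pwDl.
move=> r s r0 s0; have C0 : 0 <= 2 `^ (- e) * 2 ^+ M :> R by rewrite mulr_ge0 ?powR_ge0.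
have [rs|sr] := leP (r ^+ 2) s.
  apply: (le_trans (heat_profile_le_near r s r0 s0 rs)).
  by rewrite ler_wpM2r ?powR_ge0 // ler_peMr // lerDl.
apply: (le_trans (heat_profile_le_far m r s em r0 s0 sr)).
by rewrite ler_wpM2r ?powR_ge0 // ler_wpM2l // lerDr.
Qed.

End Bounds.
End HeatProfile.

Section ShiftedPower.
Variable R : realType.
Local Notation mu := (@lebesgue_measure R).
Local Notation I := (`]0, +oo[%classic : set R).

Lemma is_derive_shifted_powR (c e x : R) : 0 < x + c ->
  is_derive x 1 (fun s => (s + c) `^ e) (e * (x + c) `^ (e - 1)).
Proof.
move=> xc; have -> : (fun s => (s + c) `^ e) = ((@powR R)^~ e) \o shift c by [].
have dshift : derivable (shift c) x 1 :=
  @ex_derive _ _ _ _ _ _ _ (is_derive_shift x 1 c).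
have dpow : derivable ((@powR R)^~ e) (shift c x) 1.
  by apply: (@derivable_powR R 1 e); rewrite in_itv /= andbT.
apply: DeriveDef; first exact/derivable1_diffP/differentiable_comp/derivable1_diffP.
rewrite -derive1E (derive1_comp dshift dpow) powR_derive1 ?in_itv ?andbT //=.
by rewrite derive1E (@derive_val _ _ _ _ _ _ _ (is_derive_shift x 1 c)) mulr1.
Qed.

Lemma measurable_shifted_powR (c e : R) (D : set R) :
  measurable_fun D (fun s : R => (s + c) `^ e).
Proof.
apply: measurable_funTS; apply: (measurableT_comp (@measurable_powR R e)).
exact: measurable_funD.
Qed.

Lemma integral_shifted_powR (b c : R) : b < 0 -> 0 < c ->
  (\int[mu]_(s in I) ((s + c) `^ (b - 1))%:E = (c `^ b / - b)%:E)%E.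
Proof.
move=> b0 c0; pose F s := b^-1 * (s + c) `^ b.
have dF (x : R) : 0 <= x -> is_derive x 1 F ((x + c) `^ (b - 1)).
  move=> x0; have xc : 0 < x + c by lra.
  have := @is_deriveZ _ _ _ _ b^-1 x 1 _ (is_derive_shifted_powR c b x xc).
  move=> /is_derive_eq; apply.
  by rewrite -[_ *: _]/(_ * _) mulrA mulVf ?mul1r // lt_eqF.
rewrite integral_itv_obnd_cbnd; last first.
  by apply/measurable_EFinP; exact: measurable_shifted_powR.
rewrite (@ge0_continuous_FTC2y _ _ F 0 0).
- by congr EFin; rewrite /F sub0r add0r invrN mulrN mulrC.
- by move=> x _; exact: powR_ge0.
- apply: derivable_within_continuous => x; rewrite in_itv /= andbT => x0.
  have xc : 0 < x + c by lra.
  exact: (@ex_derive _ _ _ _ _ _ _ (is_derive_shifted_powR c (b - 1) x xc)).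
- apply/cvgrPdist_le => eps eps0; near=> x.
  have xc : 0 < x + c.
    by apply: (lt_le_trans c0); rewrite lerDr; near: x; exact: nbhs_pinfty_ge.
  have xbig : expR (ln (eps * - b) / b) <= x by near: x; exact: nbhs_pinfty_ge.
  have small : (x + c) `^ b <= eps * - b.
    rewrite gt0_powRE // -[X in _ <= X]lnK ?posrE ?mulr_gt0 ?oppr_gt0 // ler_expR.
    have : ln (eps * - b) / b <= ln (x + c).
      by rewrite -[X in X <= _]expRK ler_ln ?posrE ?expR_gt0 //; lra.
    by rewrite ler_ndivrMr // mulrC.
  rewrite sub0r normrN /F normrM normfV (ltr0_norm b0) (ger0_norm (powR_ge0 _ _)).
  by rewrite ler_pdivrMl ?oppr_gt0 // mulrC.
- by move=> x x0; exact: (@ex_derive _ _ _ _ _ _ _ (dF x (ltW x0))).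
- by apply/cvg_at_right_filter/differentiable_continuous/derivable1_diffP;
    exact: (@ex_derive _ _ _ _ _ _ _ (dF 0 (lexx 0))).
- move=> x; rewrite in_itv /= andbT => x0.
  by rewrite derive1E (@derive_val _ _ _ _ _ _ _ (dF x (ltW x0))).
Unshelve. all: by end_near.
Qed.

Lemma integrable_shifted_powR (b c : R) : b < 0 -> 0 < c ->
  mu.-integrable I (EFin \o (fun s => (s + c) `^ (b - 1))).
Proof.
move=> b0 c0; apply/integrableP; split.
  by apply/measurable_EFinP; exact: measurable_shifted_powR.
under eq_integral => s _ do rewrite /= ger0_norm ?powR_ge0 //.
by rewrite integral_shifted_powR // ltry.
Qed.

Section DominatedByShiftedPower.
Variables (f : R -> R) (M b c : R).
Hypotheses (b_lt0 : b < 0) (c_gt0 : 0 < c) (mf : measurable_fun I f).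
Hypothesis f_le : forall s : R, 0 < s -> `|f s| <= M * (s + c) `^ (b - 1).

Let mI : measurable (I : set (measurableTypeR R)) := measurable_itv _.

Lemma integrable_dominated_shifted_powR : mu.-integrable I (EFin \o f).
Proof.
apply: (le_integrable mI _ _ (integrableZl mI M (integrable_shifted_powR b c b_lt0 c_gt0))).
  exact/measurable_EFinP.
move=> s; rewrite /= in_itv /= andbT => s0; rewrite lee_fin.
exact: le_trans (f_le s s0) (ler_norm _).
Qed.

Lemma normr_Rintegral_dominated_shifted_powR :
  `|Rintegral mu I f| <= M * (c `^ b / - b).
Proof.
have ipow := integrable_shifted_powR b c b_lt0 c_gt0.
have iabs : mu.-integrable I (EFin \o (fun s => `|f s|)).
  exact: integrable_abse integrable_dominated_shifted_powR.
have ibound : mu.-integrable I (EFin \o (fun s => M * (s + c) `^ (b - 1))).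
  apply: (eq_integrable mI _ _ _ (integrableZl mI M ipow)) => s _.
  by rewrite /= EFinM.
apply: le_trans (le_normr_Rintegral mI integrable_dominated_shifted_powR) _.
apply: le_trans (le_Rintegral mI iabs ibound _) _.
  by move=> s; rewrite /= in_itv /= andbT; exact: f_le.
by rewrite RintegralZl // /Rintegral integral_shifted_powR.
Qed.

End DominatedByShiftedPower.

End ShiftedPower.

(* Because [1 + r / rho <= (1 + sqrt s / rho) (1 + r / sqrt s)]. *)
Lemma decay_le_dist (R : realType) n (rho : Hn R n -> R) (N : nat) (s r : R) u w :
  0 < s -> 0 <= rho u -> 0 <= rho w -> 0 <= r ->
  decay rho N s u w <= ((1 + r / rho u) ^+ N)^-1 * (1 + r / Num.sqrt s) ^+ N.
Proof.
move=> s0 ru rw r0; have sq0 : 0 < Num.sqrt s by rewrite sqrtr_gt0.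
set p := Num.sqrt s / rho u; set q := Num.sqrt s / rho w.
set m := r / rho u; set k := r / Num.sqrt s.
have p0 : 0 <= p := divr_ge0 (ltW sq0) ru.
have q0 : 0 <= q := divr_ge0 (ltW sq0) rw.
have m0 : 0 <= m := divr_ge0 r0 ru.
have k0 : 0 <= k := divr_ge0 r0 (ltW sq0).
have pk : p * k = m.
  transitivity (Num.sqrt s / Num.sqrt s * m); first by rewrite /p /k /m; ring.
  by rewrite divff ?gt_eqF // mul1r.
have mN : (1 + m) ^+ N <= ((1 + p + q) * (1 + k)) ^+ N.
  by apply: lerXn2r; rewrite ?nnegrE; nra.
rewrite /decay -/p -/q exprMn in mN *.
have m1 : 0 < (1 + m) ^+ N by rewrite exprn_gt0 //; lra.
have pq1 : 0 < (1 + p + q) ^+ N by rewrite exprn_gt0 //; lra.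
by rewrite mulrC ler_pdivlMr // mulrC ler_pdivrMr // mulrC.
Qed.

Section HeatKernelIntegrand.
Variables (R : realType) (n : nat) (P : R -> Hn R n -> Hn R n -> R).
Variables (rho : Hn R n -> R) (A alpha : R).
Hypotheses (A_gt0 : 0 < A) (alpha_ltQ : alpha < Qdim R n).
Implicit Types (u v w : Hn R n) (s : R).

Lemma heat_integrand_le : heat_upper_bound P rho A ->
  exists2 C : R, 0 < C & forall u w s, 0 < s ->
    `|P s u w * s `^ (alpha / 2 - 1)|
      <= C * (s + hnorm (hmul (hinv w) u) ^+ 2) `^ ((alpha - Qdim R n) / 2 - 1).
Proof.
move=> /(_ 0%N) [C C_gt0 P_le].
have e_le0 : (alpha - Qdim R n) / 2 - 1 <= 0 by move: (Qdim R n) alpha_ltQ => Q; lra.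
have [K K_gt0 profile_le] := heat_profile_le _ _ _ 0 e_le0 A_gt0.
exists (C * K); first exact: mulr_gt0.
move=> u w s s_gt0; set r := hnorm _.
have := P_le s u w s_gt0; rewrite /decay expr0 invr1 mulr1 -/r => Ple.
rewrite normrM (ger0_norm (powR_ge0 _ _)).
apply: le_trans (ler_wpM2r (powR_ge0 _ _) Ple) _.
have := profile_le r s (hnorm_ge0 _ _ _) s_gt0; rewrite /heat_profile expr0 mulr1 => prof.
have sE : s `^ (- (Qdim R n / 2)) * s `^ (alpha / 2 - 1) = s `^ ((alpha - Qdim R n) / 2 - 1).
  by rewrite -gt0_powRD //; congr (_ `^ _); rewrite mulrBl; ring.
rewrite (_ : C * s `^ (- (Qdim R n / 2)) * expR (- (r ^+ 2 / (A * s))) * s `^ (alpha / 2 - 1)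
  = C * (s `^ ((alpha - Qdim R n) / 2 - 1) * expR (- (r ^+ 2 / (A * s))))).
  by rewrite -mulrA ler_pM2l.
by rewrite -sE; ring.
Qed.

Lemma heat_lipschitz_integrand_le (delta : R) (N : nat) :
  (forall u, 0 <= rho u) -> 0 < delta -> heat_lipschitz P rho A delta ->
  exists2 C : R, 0 < C & forall u v w s, 0 < s ->
    hnorm (hmul (hinv v) u) <= hnorm (hmul (hinv w) u) / 2 ->
    `|(P s v w - P s u w) * s `^ (alpha / 2 - 1)|
      <= C * hnorm (hmul (hinv v) u) `^ delta
           * ((1 + hnorm (hmul (hinv w) u) / rho u) ^+ N)^-1
           * (s + hnorm (hmul (hinv w) u) ^+ 2) `^ ((alpha - Qdim R n - delta) / 2 - 1).
Proof.
move=> rho_ge0 delta_gt0 /(_ N) [C C_gt0 P_lip].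
set e := (alpha - Qdim R n - delta) / 2 - 1.
have e_le0 : e <= 0 by rewrite /e; move: (Qdim R n) alpha_ltQ => Q; lra.
have [K K_gt0 profile_le] := heat_profile_le _ _ _ N e_le0 A_gt0.
exists (C * K); first exact: mulr_gt0.
move=> u v w s s_gt0; set r := hnorm (hmul (hinv w) u); set d := hnorm (hmul (hinv v) u).
move=> d_le; set E := expR (- (r ^+ 2 / (A * s))).
have r_ge0 : 0 <= r := hnorm_ge0 _ _ _.
have d_ge0 : 0 <= d := hnorm_ge0 _ _ _.
have Plip : `|P s v w - P s u w|
    <= C * (d / Num.sqrt s) `^ delta * s `^ (- (Qdim R n / 2)) * E * decay rho N s u w.
  have := P_lip s u w (hmul (hinv u) v) s_gt0.
  by rewrite hmulKV hnorm_hinv_sym; apply.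
have decay_le := decay_le_dist _ _ rho N s r u w s_gt0 (rho_ge0 u) (rho_ge0 w) r_ge0.
set D := ((1 + r / rho u) ^+ N)^-1 in decay_le *.
have D_ge0 : 0 <= D by rewrite invr_ge0 exprn_ge0 // addr_ge0 ?divr_ge0.
have := profile_le r s r_ge0 s_gt0; rewrite /heat_profile -/E => prof.
have spow : (d / Num.sqrt s) `^ delta * s `^ (- (Qdim R n / 2)) * s `^ (alpha / 2 - 1)
    = d `^ delta * s `^ e.
  rewrite powR_div_sqrt // -!mulrA -!gt0_powRD //; congr (_ * _ `^ _).
  by rewrite /e; ring.
rewrite normrM (ger0_norm (powR_ge0 _ _)).
apply: le_trans (ler_wpM2r (powR_ge0 _ _) (le_trans Plip (ler_wpM2l _ decay_le))) _.
  by rewrite !mulr_ge0 ?powR_ge0 ?expR_ge0 ?ltW.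
set Y := (1 + r / Num.sqrt s) ^+ N in prof *.
clearbody D E Y.
rewrite [X in X <= _](_ : _ = C * D * E * Y
    * ((d / Num.sqrt s) `^ delta * s `^ (- (Qdim R n / 2)) * s `^ (alpha / 2 - 1))); last by ring.
rewrite spow [X in X <= _](_ : _ = C * d `^ delta * D * (s `^ e * E * Y)); last by ring.
rewrite [X in _ <= X](_ : _ = C * d `^ delta * D * (K * (s + r ^+ 2) `^ e)); last by ring.
by rewrite ler_wpM2l // !mulr_ge0 ?powR_ge0 // ltW.
Qed.

End HeatKernelIntegrand.

Section RieszKernelDifference.
Variables (R : realType) (n : nat) (P : R -> Hn R n -> Hn R n -> R) (alpha : R).
Local Notation mu := (@lebesgue_measure R).
Local Notation I := (`]0, +oo[%classic : set R).

Lemma eq_Kalpha u v w :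
  (forall s : R, 0 < s -> P s u w * s `^ (alpha / 2 - 1) = P s v w * s `^ (alpha / 2 - 1)) ->
  Kalpha P alpha u w = Kalpha P alpha v w.
Proof.
move=> Puv; rewrite /Kalpha; f_equal; apply: eq_Rintegral => s.
by rewrite inE /= in_itv /= andbT; exact: Puv.
Qed.

Lemma normr_Kalpha_sub_le u v w (C M b0 b c : R) :
  measurable_fun I (fun s => P s u w) -> measurable_fun I (fun s => P s v w) ->
  b0 < 0 -> b < 0 -> 0 < c ->
  (forall s : R, 0 < s -> `|P s u w * s `^ (alpha / 2 - 1)| <= C * (s + c) `^ (b0 - 1)) ->
  (forall s : R, 0 < s ->
    `|(P s v w - P s u w) * s `^ (alpha / 2 - 1)| <= M * (s + c) `^ (b - 1)) ->
  `|Kalpha P alpha u w - Kalpha P alpha v w|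
    <= `|(Gammaf (alpha / 2))^-1| * (M * (c `^ b / - b)).
Proof.
move=> mPu mPv b0_lt0 b_lt0 c_gt0 Pu_le Pvu_le.
have mI : measurable (I : set (measurableTypeR R)) := measurable_itv _.
pose fu s := P s u w * s `^ (alpha / 2 - 1).
pose fv s := P s v w * s `^ (alpha / 2 - 1).
pose g s := (P s v w - P s u w) * s `^ (alpha / 2 - 1).
have mpow : measurable_fun I (fun s : R => s `^ (alpha / 2 - 1)).
  exact: measurable_funTS (measurable_powR _).
have mfu : measurable_fun I fu := measurable_funM mPu mpow.
have mg : measurable_fun I g := measurable_funM (measurable_funB mPv mPu) mpow.
have ifu := integrable_dominated_shifted_powR _ _ _ _ _ b0_lt0 c_gt0 mfu Pu_le.
have ig := integrable_dominated_shifted_powR _ _ _ _ _ b_lt0 c_gt0 mg Pvu_le.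
have ifv : mu.-integrable I (EFin \o fv).
  apply: (eq_integrable mI _ _ _ (integrableD mI ifu ig)) => s _.
  by rewrite /= -EFinD /fu /g /fv; congr EFin; ring.
have -> : Kalpha P alpha u w - Kalpha P alpha v w
    = - ((Gammaf (alpha / 2))^-1 * Rintegral mu I g).
  have -> : Rintegral mu I g = Rintegral mu I fv - Rintegral mu I fu.
    by rewrite -RintegralB //; apply: eq_Rintegral => s _; rewrite /g /fv /fu; ring.
  by rewrite /Kalpha -/fu -/fv; ring.
rewrite normrN normrM ler_wpM2l //.
exact: normr_Rintegral_dominated_shifted_powR.
Qed.

End RieszKernelDifference.

Theorem lemma4p2 (R : realType) (n : nat) (V : Hn R n -> R) (sRH alpha delta A : R)
    (P : R -> Hn R n -> Hn R n -> R) :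
  (0 < n)%N ->
  (forall x, 0 <= V x) ->
  Hlocally_integrable V ->
  (0 < hint (fun x => (V x)%:E))%E ->
  Qdim R n / 2 <= sRH ->
  reverse_Holder sRH V ->
  0 < alpha -> alpha < Qdim R n ->
  0 < delta -> delta <= 1 ->
  0 < A ->
  (forall u v, measurable_fun (`]0, +oo[%classic : set R) (fun s : R => P s u v)) ->
  heat_upper_bound P (crit_radius V) A ->
  heat_lipschitz P (crit_radius V) A delta ->
  forall N : nat, exists2 C : R, 0 < C &
    forall u v w : Hn R n,
      hnorm (hmul (hinv v) u) <= hnorm (hmul (hinv w) u) / 2 ->
      `|Kalpha P alpha u w - Kalpha P alpha v w|
        <= C * ((1 + hnorm (hmul (hinv w) u) / crit_radius V u) ^+ N)^-1
             * (hnorm (hmul (hinv v) u) `^ delta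
                / hnorm (hmul (hinv w) u) `^ (Qdim R n - alpha + delta)).
Proof.
(* The hypotheses on [V] only serve, in the paper, to establish the heat kernel
   estimates [heat_upper_bound] and [heat_lipschitz], which are assumed here. *)
move=> _ _ _ _ _ _ _ alpha_ltQ delta_gt0 _ A_gt0 Pm P_ub P_lip N.
have [C0 _ Pu_le] := heat_integrand_le _ _ P _ _ _ A_gt0 alpha_ltQ P_ub.
have [C1 C1_gt0 Pvu_le] := heat_lipschitz_integrand_le _ _ P _ _ _ A_gt0 alpha_ltQ delta N
  (crit_radius_ge0 _ _ V) delta_gt0 P_lip.
set b := (alpha - Qdim R n - delta) / 2.
have b_lt0 : b < 0 by rewrite /b; move: (Qdim R n) alpha_ltQ => Q; lra.
set C := `|(Gammaf (alpha / 2))^-1| * C1 / - b.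
have C_ge0 : 0 <= C by rewrite !mulr_ge0 ?invr_ge0 ?oppr_ge0 ?normr_ge0 ?ltW.
exists (C + 1); first by rewrite ltr_wpDl.
move=> u v w; set r := hnorm (hmul (hinv w) u); set d := hnorm (hmul (hinv v) u) => d_le.
set D := ((1 + r / crit_radius V u) ^+ N)^-1; set X := d `^ delta / r `^ _.
have DX_ge0 : 0 <= D * X.
  by rewrite !mulr_ge0 ?invr_ge0 ?powR_ge0 ?exprn_ge0 ?addr_ge0 ?divr_ge0
    ?hnorm_ge0 ?crit_radius_ge0.
rewrite -mulrA; have [d0|d_neq0] := eqVneq d 0.
  rewrite (eq_Kalpha _ _ _ _ u v w) ?subrr ?normr0 ?(mulr_ge0 (addr_ge0 C_ge0 ler01)) // => s s_gt0.
  have := Pvu_le u v w s s_gt0 d_le; rewrite -/d d0 powR0 ?gt_eqF // mulr0 !mul0r.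
  by rewrite normr_le0 mulrBl subr_eq0 => /eqP.
have r_gt0 : 0 < r by have := hnorm_ge0 _ _ (hmul (hinv v) u); rewrite -/d; lra.
apply: le_trans (normr_Kalpha_sub_le _ _ P alpha u v w _ _ _ b _ (Pm u w) (Pm v w) _ b_lt0 _
  (Pu_le u w) (fun s s_gt0 => Pvu_le u v w s s_gt0 d_le)) _.
- by move: (Qdim R n) alpha_ltQ => Q; lra.
- by rewrite exprn_gt0.
have r2b : (r ^+ 2) `^ b = (r `^ (Qdim R n - alpha + delta))^-1.
  rewrite -powR_mulrn ?ltW // -powRrM -powRN; congr (_ `^ _).
  by rewrite /b; move: (Qdim R n) => Q; lra.
rewrite -/r -/d -/D r2b [X in X <= _](_ : _ = C * (D * X)); last by rewrite /C /X; ring.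
by rewrite ler_wpM2r // lerDl.
Qed.
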